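(* In one-to-one matching games with additive externalities, the optimistic pairwise stable set of a game coincides with its weak optimistic stable set.
   Context: Agents: $N=M\cup W$ with $M,W$ disjoint finite sets. A match is a pair $(m,w)$ with $m\in M$, $w\in W$; a one-to-one matching is a set of matches in which every agent appears in at most one match. Forming a match requires consent of both endpoints; severing can be done unilaterally. A game is $G=(M,W,\Pi)$ where $\Pi(m,w\mid z)\in\mathbb{R}$ is the value agent $z$ receives from the formation of match $(m,w)$; utility is $u(z,\mathcal{A})=\sum_{(m,w)\in\mathcal{A}}\Pi(m,w\mid z)$. A coalition $B\subseteq N$ deviates from $\mathcal{A}$ by rearranging matches among its members and deleting matches of its members with agents outside $B$ (keeping the result one-to-one), with every member performing at least one action (severing a match or forming a new match with another member of $B$). Under optimistic reasoning each member $i\in B$ evaluates the deviation assuming the agents in $N\setminus B$ organize themselves in the best possible way for $i$. The weak optimistic stable set is the set of one-to-one matchings for which no coalition has a deviation under which all its members strictly improve (under optimistic reasoning). The optimistic pairwise stable set is the set of one-to-one matchings with no blocking coalition of size one or two under optimistic reasoning (a single agent cutting its match; or two agents forming a new match with each other while possibly cutting previous matches, or coordinating to cut existing matches). *)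

From mathcomp Require Import all_boot all_order all_algebra.
Set Implicit Arguments. Unset Strict Implicit. Unset Printing Implicit Defensive.
Import Order.TTheory GRing.Theory Num.Theory.
Local Open Scope ring_scope.

(* A game is given by Pi : M -> W -> (M + W) -> R, Pi m w z being the value
   agent z receives from the formation of match (m, w). *)

Section Matching.
Variables (R : realFieldType) (M W : finType).
Notation agent := (M + W)%type.

Definition involves (a : agent) (p : M * W) : bool :=
  (a == inl p.1) || (a == inr p.2).

Definition one_to_one (A : {set M * W}) : Prop :=
  forall p q, p \in A -> q \in A -> (p.1 = q.1 \/ p.2 = q.2) -> p = q.

Definition touches (B : {set agent}) (p : M * W) : bool :=
  (inl p.1 \in B) || (inr p.2 \in B).

Definition deviation (A : {set M * W}) (B : {set agent}) (A' : {set M * W}) : Prop :=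
  [/\ one_to_one A',
      (forall p, p \in A' -> p \notin A -> (inl p.1 \in B) && (inr p.2 \in B)),
      (forall p, p \in A -> p \notin A' -> touches B p) &
      (forall i, i \in B -> exists2 p, p \in (A :\: A') :|: (A' :\: A) & involves i p)].

Definition util (Pi : M -> W -> agent -> R) (z : agent) (A : {set M * W}) : R :=
  \sum_(p in A) Pi p.1 p.2 z.

(* F is a way the agents outside B may organize themselves after B deviated
   to A': F is one-to-one and coincides with A' on all matches touching B
   (outsiders can form any matching among themselves). *)
Definition outsiders_response (B : {set agent}) (A' F : {set M * W}) : Prop :=
  one_to_one F /\ (forall p, touches B p -> (p \in F) = (p \in A')).

(* optimistic reasoning: i strictly improves if the best organisation of the
   outsiders (for i) gives i strictly more than u(i, A). *)
Definition opt_improves (Pi : M -> W -> agent -> R) (A : {set M * W})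
    (B : {set agent}) (A' : {set M * W}) (i : agent) : Prop :=
  exists2 F, outsiders_response B A' F & util Pi i A < util Pi i F.

Definition opt_blocks (Pi : M -> W -> agent -> R) (A : {set M * W})
    (B : {set agent}) : Prop :=
  B != set0 /\
  exists2 A', deviation A B A' & forall i, i \in B -> opt_improves Pi A B A' i.

Definition weak_opt_stable (Pi : M -> W -> agent -> R) (A : {set M * W}) : Prop :=
  one_to_one A /\ forall B : {set agent}, ~ opt_blocks Pi A B.

Definition opt_pairwise_stable (Pi : M -> W -> agent -> R) (A : {set M * W}) : Prop :=
  one_to_one A /\ forall B : {set agent}, (#|B| <= 2)%N -> ~ opt_blocks Pi A B.

End Matching.

From mathcomp Require Import all_boot all_order all_algebra.

Set Implicit Arguments.
Unset Strict Implicit.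
Unset Printing Implicit Defensive.

(* Let i be a member of a blocking coalition B with deviation A'.  If i is
   matched in A' to p, then p is a new match (i must act, and by one-to-one-ness
   every other match of i is p), so both endpoints of p lie in B and the pair
   deviates to p together with the matches of A not touching p.  Otherwise i
   acts by severing some match of A, and {i} deviates to A minus the matches of
   i.  In both cases the small coalition C agrees with A' on every match touching
   C, so any outsiders' organisation that made a member better off for B still
   does for C. *)

Section Deviations.
Variables M W : finType.
Notation agent := (M + W)%type.

Definition pair_of (p : M * W) : {set agent} := [set inl p.1; inr p.2].

Definition form_pair (A : {set M * W}) (p : M * W) : {set M * W} :=
  p |: [set r in A | ~~ touches (pair_of p) r].

Definition sever_agent (A : {set M * W}) (i : agent) : {set M * W} :=
  [set r in A | ~~ involves i r].

Lemma involves_share (i : agent) (p q : M * W) :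
  involves i p -> involves i q -> p.1 = q.1 \/ p.2 = q.2.
Proof. by rewrite /involves => /orP[]/eqP-> /orP[]/eqP //; case; auto. Qed.

Lemma one_to_one_involves (A : {set M * W}) (i : agent) (p q : M * W) :
  one_to_one A -> p \in A -> q \in A -> involves i p -> involves i q -> p = q.
Proof. by move=> oA pA qA ip iq; apply: oA => //; apply: involves_share ip iq. Qed.

Lemma touches_subset (B1 B2 : {set agent}) (r : M * W) :
  B1 \subset B2 -> touches B1 r -> touches B2 r.
Proof. by move/subsetP=> sB; rewrite /touches => /orP[/sB->|/sB->]; rewrite ?orbT. Qed.

Lemma touches_set1 (i : agent) (r : M * W) : touches [set i] r = involves i r.
Proof. by rewrite /touches /involves !inE ![_ == i]eq_sym. Qed.

Lemma touches_pair_of (p r : M * W) :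
  touches (pair_of p) r = (r.1 == p.1) || (r.2 == p.2).
Proof. by rewrite /touches !inE !(inj_eq inl_inj) !(inj_eq inr_inj) orbF. Qed.

Lemma card_pair_of (p : M * W) : (#|pair_of p| <= 2)%N.
Proof. by rewrite /pair_of cards2; case: (_ != _). Qed.

Lemma pair_of_neq0 (p : M * W) : pair_of p != set0.
Proof. by apply/set0Pn; exists (inl p.1); rewrite !inE eqxx. Qed.

Lemma in_form_pair_touching (A : {set M * W}) (p r : M * W) :
  touches (pair_of p) r -> (r \in form_pair A p) = (r == p).
Proof. by move=> rt; rewrite !inE rt andbF orbF. Qed.

Lemma deviation_form_pair (A : {set M * W}) (p : M * W) :
  one_to_one A -> p \notin A -> deviation A (pair_of p) (form_pair A p).
Proof.
move=> oA pnA; split.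
- move=> r s; rewrite !inE !touches_pair_of !negb_or.
  move=> /orP[/eqP->|/andP[rA /andP[r1 r2]]] /orP[/eqP->|/andP[sA /andP[s1 s2]]] //.
  + by case=> e; [move: s1 | move: s2]; rewrite e eqxx.
  + by case=> e; [move: r1 | move: r2]; rewrite e eqxx.
  + exact: oA.
- move=> r; rewrite !inE => /orP[/eqP->|/andP[rA _]]; last by rewrite rA.
  by rewrite !eqxx orbT.
- by move=> r rA; rewrite !inE rA negb_or negbK => /andP[_].
- move=> k; rewrite !inE => /orP[]/eqP->; exists p;
    by rewrite /involves ?eqxx ?orbT // !inE (negbTE pnA) eqxx ?orbT.
Qed.

Lemma deviation_sever_agent (A : {set M * W}) (i : agent) (q : M * W) :
  one_to_one A -> q \in A -> involves i q -> deviation A [set i] (sever_agent A i).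
Proof.
move=> oA qA iq; split.
- by move=> r s; rewrite !inE => /andP[rA _] /andP[sA _]; apply: oA.
- by move=> r; rewrite inE => /andP[rA _]; rewrite rA.
- by move=> r rA; rewrite inE rA negbK touches_set1.
- by move=> k; rewrite inE => /eqP->; exists q; rewrite // !inE qA iq.
Qed.

Lemma deviation_partner_new (A A' : {set M * W}) (B : {set agent}) (i : agent) (p : M * W) :
  one_to_one A -> deviation A B A' -> i \in B -> p \in A' -> involves i p -> p \notin A.
Proof.
move=> oA [oA' _ _ act] iB pA' ip; apply/negP=> pA.
have [q] := act i iB; rewrite !inE => /orP[/andP[qnA' qA]|/andP[qnA qA']] iq.
- by move: qnA'; rewrite (one_to_one_involves oA qA pA iq ip) pA'.
- by move: qnA; rewrite (one_to_one_involves oA' qA' pA' iq ip) pA.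
Qed.

Lemma deviation_unmatched_severs (A A' : {set M * W}) (B : {set agent}) (i : agent) :
  deviation A B A' -> i \in B -> (forall p, p \in A' -> ~~ involves i p) ->
  exists2 q, q \in A & involves i q.
Proof.
move=> [_ _ _ act] iB unmatched; have [q] := act i iB.
rewrite !inE => /orP[/andP[_ qA]|/andP[_ qA']] iq; first by exists q.
by move: (unmatched q qA'); rewrite iq.
Qed.

End Deviations.

Section Blocking.
Variables (R : realFieldType) (M W : finType) (Pi : M -> W -> (M + W)%type -> R).

Lemma outsiders_response_sub (B C : {set (M + W)%type}) (A' A'' F : {set M * W}) :
  C \subset B -> (forall r, touches C r -> (r \in A'') = (r \in A')) ->
  outsiders_response B A' F -> outsiders_response C A'' F.
Proof.
move=> sCB agree [oF FA']; split=> // r rt.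
by rewrite agree // FA' //; apply: touches_subset sCB rt.
Qed.

Lemma opt_improves_sub (A : {set M * W}) (B C : {set (M + W)%type})
    (A' A'' : {set M * W}) (k : (M + W)%type) :
  C \subset B -> (forall r, touches C r -> (r \in A'') = (r \in A')) ->
  opt_improves Pi A B A' k -> opt_improves Pi A C A'' k.
Proof.
move=> sCB agree [F resp lt]; exists F => //.
exact: outsiders_response_sub sCB agree resp.
Qed.

Lemma opt_blocks_small (A : {set M * W}) (B : {set (M + W)%type}) :
  one_to_one A -> opt_blocks Pi A B ->
  exists2 C : {set (M + W)%type}, (#|C| <= 2)%N & opt_blocks Pi A C.
Proof.
move=> oA [/set0Pn[i iB] [A' dev imp]]; have [oA' newm _ _] := dev.
have [p /andP[pA' ip] | unmatched] :=
  pickP (fun p => (p \in A') && involves i p); last first.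
- have [q qA iq] : exists2 q, q \in A & involves i q.
    by apply: deviation_unmatched_severs dev iB _ => p pA'; move: (unmatched p); rewrite pA' => /negbT.
  have siB : [set i] \subset B by rewrite sub1set.
  exists [set i]; first by rewrite cards1.
  split; first by apply/set0Pn; exists i; rewrite inE.
  exists (sever_agent A i); first exact: deviation_sever_agent oA qA iq.
  move=> k; rewrite inE => /eqP->; apply: opt_improves_sub siB _ (imp i iB).
  move=> r; rewrite touches_set1 => ir.
  by move: (unmatched r); rewrite ir andbT inE ir andbF => ->.
- have pnA := deviation_partner_new oA dev iB pA' ip.
  have spB : pair_of p \subset B.
    by have /andP[b1 b2] := newm p pA' pnA; apply/subsetP=> x; rewrite !inE => /orP[]/eqP->.
  exists (pair_of p); first exact: card_pair_of.
  split; first exact: pair_of_neq0.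
  exists (form_pair A p); first exact: deviation_form_pair.
  move=> k /(subsetP spB) kB; apply: opt_improves_sub spB _ (imp k kB).
  move=> r rt; rewrite in_form_pair_touching //.
  apply/eqP/idP=> [->//|rA']; apply: oA' => //.
  by move: rt; rewrite touches_pair_of => /orP[]/eqP; auto.
Qed.

End Blocking.

Theorem theorem14 (R : realFieldType) (M W : finType)
    (Pi : M -> W -> (M + W)%type -> R) (A : {set M * W}) :
  opt_pairwise_stable Pi A <-> weak_opt_stable Pi A.
Proof.
split=> [[oA pairwise] | [oA stable]].
- by split=> // B blocks; have [C /pairwise] := opt_blocks_small oA blocks.
- by split=> // B _; apply: stable.
Qed.
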